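(* Let $r$ be a positive integer and let $M\in\{0,1\}^{n\times n}$ with $\operatorname{rank}(M)\leq r$ and $p(M)\leq\frac{1}{8r}$. Then $z(M)\geq n/4$.
   Context: $p(M)=|M|/n^2$, where $|M|$ is the number of $1$ entries. $z(M)$ is the largest $z$ for which there exist $X,Y\subset[n]$ with $|X|=|Y|=z$ such that the submatrix $M[X\times Y]$ (rows $X$, columns $Y$) has only $0$ entries. *)

From HB Require Import structures.
From mathcomp Require Import all_boot all_order all_algebra.
Set Implicit Arguments. Unset Strict Implicit. Unset Printing Implicit Defensive.
Import Order.TTheory GRing.Theory Num.Theory.

(* A 0/1 matrix is represented as a boolean matrix; entry true = 1. *)

Definition ratmx (n : nat) (M : 'M[bool]_n) : 'M[rat]_n :=
  \matrix_(i, j) ((M i j)%:R)%R.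

Definition ones (n : nat) (M : 'M[bool]_n) : nat :=
  #|[set ij : 'I_n * 'I_n | M ij.1 ij.2]|.

Definition pM (n : nat) (M : 'M[bool]_n) : rat :=
  ((ones M)%:R / (n ^ 2)%:R)%R.

Definition zero_block (n : nat) (M : 'M[bool]_n) (X Y : {set 'I_n}) : bool :=
  [forall i in X, forall j in Y, ~~ M i j].

Definition zM (n : nat) (M : 'M[bool]_n) : nat :=
  \max_(XY : {set 'I_n} * {set 'I_n} |
          (#|XY.1| == #|XY.2|) && zero_block M XY.1 XY.2) #|XY.1|.

From HB Require Import structures.
From mathcomp Require Import all_boot all_order all_algebra.
Import Order.TTheory GRing.Theory Num.Theory.
From mathcomp Require Import zify.

Set Implicit Arguments.
Unset Strict Implicit.
Unset Printing Implicit Defensive.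

(* Call a row light if it has at most n/(4r) ones.  Since |M| <= n^2/(8r), by
   Markov's inequality at most n/2 rows are heavy.  The light rows span a space
   of dimension at most r, so they are combinations of at most r light rows,
   whose supports cover a set C of at most r * n/(4r) <= n/4 columns: every
   light row vanishes outside C.  Light rows times the complement of C is then
   an all-zero block with both sides of size at least n/4. *)

Lemma card_bigcup_le (I T : finType) (S : I -> {set T}) :
  #|\bigcup_i S i| <= \sum_i #|S i|.
Proof.
elim/big_rec2: _ => [|i s U _ leUs]; first by rewrite cards0.
exact: leq_trans (leq_card_setU _ _) (leq_add _ leUs).
Qed.

Lemma card_subset_eq (T : finType) (A : {set T}) k :
  k <= #|A| -> exists2 B : {set T}, B \subset A & #|B| = k.
Proof.
case/card_geqP => s [s_uniq <- sA]; exists [set x in s].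
  by apply/subsetP => x; rewrite inE => /sA.
by rewrite cardsE; apply/card_uniqP.
Qed.

Lemma markov_card (T : finType) (f : T -> nat) t :
  t * #|[set x | t <= f x]| <= \sum_x f x.
Proof.
rewrite mulnC -sum_nat_const big_mkcond [leqRHS]big_mkcond /=.
by apply: leq_sum => x _; rewrite inE; case: ifP.
Qed.

Section ColumnSupport.
Local Open Scope ring_scope.

Variable F : fieldType.

Lemma maxrowsub_col_eq0 m n (A : 'M[F]_(m, n)) j :
  (forall k, A (maxrankfun A k) j = 0) -> forall i, A i j = 0.
Proof.
move=> basis0 i.
have : (row i A <= rowsub (maxrankfun A) A)%MS by rewrite eq_maxrowsub row_sub.
case/submxP => D /(congr1 (fun v : 'rV_n => v 0 j)).
rewrite !mxE => ->; rewrite big1 // => k _.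
by rewrite mxE basis0 mulr0.
Qed.

(* C is the union of the supports of a row basis of the rows indexed by L. *)
Lemma sparse_rows_col_support m n (A : 'M[F]_(m, n)) (L : {set 'I_m}) (d : nat) :
  (forall i, i \in L -> #|[set j | A i j != 0%R]| <= d)%N ->
  exists2 C : {set 'I_n}, (#|C| <= \rank A * d)%N &
    forall i j, i \in L -> j \notin C -> A i j = 0.
Proof.
move=> sparseL.
pose B := rowsub (enum_val : 'I_#|L| -> 'I_m) A.
pose f := maxrankfun B.
exists (\bigcup_k [set j | B (f k) j != 0]).
  apply: leq_trans (card_bigcup_le _) _.
  under eq_bigr do under eq_finset do rewrite mxE.
  apply: (@leq_trans (\sum_(k < \rank B) d)).
    by apply: leq_sum => k _; apply/sparseL/enum_valP.
  rewrite sum_nat_const card_ord leq_mul2r mxrankS ?orbT //.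
  exact: rowsub_sub.
move=> i j iL jC.
have -> : A i j = B (enum_rank_in iL i) j by rewrite mxE enum_rankK_in.
apply: maxrowsub_col_eq0 => k.
by apply/eqP; apply: contraNT jC => Bk; apply/bigcupP; exists k; rewrite ?inE.
Qed.

End ColumnSupport.

Lemma ones_sum_rows n (M : 'M[bool]_n) :
  ones M = \sum_i #|[set j | M i j]|.
Proof.
rewrite /ones -sum1dep_card.
under [RHS]eq_bigr do rewrite -sum1dep_card.
by rewrite pair_big_dep.
Qed.

Lemma ratmx_neq0 n (M : 'M[bool]_n) i j : (ratmx M i j != 0)%R = M i j.
Proof. by rewrite mxE; case: (M i j); rewrite ?oner_eq0. Qed.

Lemma pM_le_inv_ones n (M : 'M[bool]_n) k :
  0 < k -> (pM M <= 1 / k%:R)%R -> k * ones M <= n ^ 2.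
Proof.
move=> k_gt0; have [n0|n_gt0] := posnP n.
  have -> : ones M = 0; last by rewrite muln0.
  apply/eqP; rewrite cards_eq0; apply/eqP/setP => -[i j].
  by move: (ltn_ord i); rewrite {2}n0.
rewrite /pM ler_pdivrMr ?ltr0n ?expn_gt0 ?n_gt0 // mul1r.
by rewrite ler_pdivlMl ?ltr0n // -natrM ler_nat.
Qed.

Lemma zero_blockS n (M : 'M[bool]_n) (X Y X' Y' : {set 'I_n}) :
  X' \subset X -> Y' \subset Y -> zero_block M X Y -> zero_block M X' Y'.
Proof.
move=> sX sY /forall_inP XY0; apply/forall_inP => i /(subsetP sX) /XY0.
by move=> /forall_inP Xi; apply/forall_inP => j /(subsetP sY) /Xi.
Qed.

Lemma zero_block_minn_le_zM n (M : 'M[bool]_n) (X Y : {set 'I_n}) :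
  zero_block M X Y -> minn #|X| #|Y| <= zM M.
Proof.
move=> XY0.
have [X' sX' cX'] := card_subset_eq (geq_minl #|X| #|Y|).
have [Y' sY' cY'] := card_subset_eq (geq_minr #|X| #|Y|).
rewrite -cX' /zM.
apply: (leq_bigmax_cond (F := fun XY : {set 'I_n} * {set 'I_n} => #|XY.1|) (X', Y')).
by rewrite cX' cY' eqxx (zero_blockS sX' sY' XY0).
Qed.

Theorem lemma4p1 (n r : nat) (M : 'M[bool]_n) :
  (0 < r)%N ->
  (\rank (ratmx M) <= r)%N ->
  (pM M <= 1 / (8 * r)%:R)%R ->
  ((n%:R / 4 : rat) <= (zM M)%:R)%R.
Proof.
move=> r_gt0 rkM hp.
have r4_gt0 : 0 < 4 * r by rewrite muln_gt0.
have dense : 8 * r * ones M <= n ^ 2 by apply: pM_le_inv_ones; rewrite ?muln_gt0.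
pose c i := #|[set j | M i j]|.
pose L : {set 'I_n} := [set i | c i <= n %/ (4 * r)].
have few_heavy : 2 * #|~: L| <= n.
  have heavy : n.+1 * #|~: L| <= 4 * r * ones M.
    have -> : ~: L = [set i | n.+1 <= 4 * r * c i].
      by apply/setP => i; rewrite !inE -ltnNge ltn_divLR // mulnC.
    by rewrite ones_sum_rows big_distrr markov_card.
  by rewrite -(leq_pmul2l (ltn0Sn n)); nia.
have [C cardC LC0] : exists2 C : {set 'I_n},
    #|C| <= \rank (ratmx M) * (n %/ (4 * r)) &
    forall i j, i \in L -> j \notin C -> (ratmx M i j = 0)%R.
  apply: sparse_rows_col_support => i; rewrite inE => ci.
  by under eq_finset do rewrite ratmx_neq0.
have /zero_block_minn_le_zM : zero_block M L (~: C).
  apply/forall_inP => i iL; apply/forall_inP => j; rewrite inE => jC.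
  by rewrite -ratmx_neq0 LC0.
have small_C : 4 * #|C| <= n.
  have : #|C| <= r * (n %/ (4 * r)) by rewrite (leq_trans cardC) // leq_mul2r rkM orbT.
  have := leq_divM n (4 * r); nia.
have := cardsC L; have := cardsC C; rewrite card_ord => cC cL zM_ge.
rewrite ler_pdivrMr // -natrM ler_nat; lia.
Qed.
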